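(* Let $W_{32,23}$ be the $32\times 32$ matrix $\begin{pmatrix} A & B\\ -B^T & A^T\end{pmatrix}$, where $A$ and $B$ are $16\times 16$ negacirculant matrices with first rows $r_A=(0,1,1,0,-1,1,-1,0,0,0,-1,1,-1,0,1,1)$ and $r_B=(0,1,0,1,1,1,1,-1,0,-1,-1,1,-1,-1,-1,1)$ (a skew-symmetric weighing matrix of order $32$ and weight $23$). Let $C_3(W_{32,23})$ be the ternary code of length $64$ with generator matrix $(I\ \ W_{32,23})$, entries read modulo $3$. Then $A_3(C_3(W_{32,23}))$ contains a $k$-frame for every positive integer $k\ge 3$ that is not of the form $2^{m_1}5^{m_2}7^{m_3}23^{m_4}$ with $m_1,\dots,m_4$ non-negative integers.
   Context: An $N\times N$ negacirculant matrix with first row $(r_0,\dots,r_{N-1})$ is the matrix whose $(i,j)$ entry ($0\le i,j\le N-1$) is $r_{j-i}$ if $j\ge i$ and $-r_{N+j-i}$ if $j<i$. A skew-symmetric weighing matrix of order $n$ and weight $w$ is an $n\times n$ $(0,\pm1)$-matrix $W$ with $W^T=-W$ and $WW^T=wI$. Construction A: with $\rho:\mathbb{Z}_k\to\mathbb{Z}$ sending $0,1,\dots,k-1$ to $0,1,\dots,k-1$, for a $\mathbb{Z}_k$-code $C$ of length $N$ set $A_k(C)=\frac{1}{\sqrt{k}}\{\rho(C)+k\mathbb{Z}^N\}$. A $t$-frame of a lattice in dimension $N$ is a set of $N$ lattice vectors $f_1,\dots,f_N$ with $(f_i,f_j)=t\,\delta_{i,j}$. *)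

From HB Require Import structures.
From mathcomp Require Import all_boot all_order all_algebra.
From mathcomp Require Import reals.
Set Implicit Arguments. Unset Strict Implicit. Unset Printing Implicit Defensive.
Import Order.TTheory GRing.Theory Num.Theory.
Local Open Scope ring_scope.

Definition negacirc (N : nat) (r : seq int) : 'M[int]_N :=
  \matrix_(i < N, j < N)
    if (i <= j)%N then nth 0 r (j - i)%N else - nth 0 r (N + j - i)%N.

Definition rA : seq int := [:: 0; 1; 1; 0; -1; 1; -1; 0; 0; 0; -1; 1; -1; 0; 1; 1].
Definition rB : seq int := [:: 0; 1; 0; 1; 1; 1; 1; -1; 0; -1; -1; 1; -1; -1; -1; 1].

Definition matA : 'M[int]_16 := negacirc 16 rA.
Definition matB : 'M[int]_16 := negacirc 16 rB.

Definition W32_23 : 'M[int]_32 :=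
  block_mx matA matB (- matB^T) matA^T.

Definition skew_weighing (n w : nat) (W : 'M[int]_n) : Prop :=
  (forall i j, W i j \in [:: -1; 0; 1]) /\ W^T = - W /\ W *m W^T = (w%:R)%:M.

Definition mod3 (m n : nat) (M : 'M[int]_(m, n)) : 'M['Z_3]_(m, n) :=
  map_mx (fun z : int => z%:~R) M.

Definition C3 (n : nat) (W : 'M[int]_n) : 'rV['Z_3]_(n + n) -> Prop :=
  fun c => exists u : 'rV['Z_3]_n, c = u *m row_mx 1%:M (mod3 W).

Definition rho (N : nat) (c : 'rV['Z_3]_N) : 'rV[int]_N :=
  map_mx (fun a : 'Z_3 => ((val a : nat) : int)) c.

Definition constructionA3 (R : realType) (N : nat) (C : 'rV['Z_3]_N -> Prop)
  : 'rV[R]_N -> Prop :=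
  fun v => exists (c : 'rV['Z_3]_N) (z : 'rV[int]_N),
    C c /\ v = (Num.sqrt (3 : R))^-1 *: map_mx (fun a : int => a%:~R)
                                              (rho c + 3 *: z).

Definition dotv (R : realType) (N : nat) (x y : 'rV[R]_N) : R := (x *m y^T) 0 0.

Definition has_frame (R : realType) (N : nat) (L : 'rV[R]_N -> Prop) (t : R) : Prop :=
  exists f : 'I_N -> 'rV[R]_N,
    (forall i, L (f i)) /\
    (forall i j, dotv (f i) (f j) = if i == j then t else 0).

From HB Require Import structures.
From mathcomp Require Import all_boot all_order all_algebra.
From mathcomp Require Import reals.
From mathcomp Require Import ring zify.
Set Implicit Arguments. Unset Strict Implicit. Unset Printing Implicit Defensive.
Import Order.TTheory GRing.Theory Num.Theory.
Local Open Scope ring_scope.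

(* The 16 x 16 negacirculants are the multiplication matrices of Z[x]/(x^16 + 1).  Put A := (a + 3c) + 3Q and B := 3 d1 + a W with
   Q := d2 T1 + d3 T2 + d4 T1 T2, where T1, T2 are anticommuting skew square roots of -1
   commuting with W (built from x^8 and from p(x) |-> p(1/x)).  Then Q Q^T = d2^2 + d3^2 + d4^2
   and M := (A B; -B^T A^T) satisfies M M^T = (24a^2 + 6ac + 9c^2 + 9 (d1^2+...+d4^2)) I.
   Modulo 3, M is a (I W; W I), whose rows lie in C_3(W) because W^2 = -23 I = I (mod 3).
   Hence the rows of M / sqrt 3 form a k-frame of A_3(C_3(W)) with
   k = 8a^2 + 2ac + 3c^2 + 3 (d1^2 + ... + d4^2), and by Lagrange's four-square theorem this
   covers every k >= 3 except 4, 5, 7 and 10, all of the form 2^m1 5^m2 7^m3 23^m4. *)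

(** * Lagrange's four-square theorem *)

Definition sum4sq (n : int) : Prop :=
  exists x1 x2 x3 x4 : int, n = x1 ^+ 2 + x2 ^+ 2 + x3 ^+ 2 + x4 ^+ 2.

Lemma sum4sqM m n : sum4sq m -> sum4sq n -> sum4sq (m * n).
Proof.
move=> [a [b [c [d ->]]]] [e [f [g [h ->]]]].
exists (a*e + b*f + c*g + d*h), (a*f - b*e + c*h - d*g),
       (a*g - b*h - c*e + d*f), (a*h + b*g - c*f - d*e).
ring.
Qed.

Lemma sqr_mod_inj p x y : prime p -> (2 * x < p)%N -> (2 * y < p)%N ->
  (x * x = y * y %[mod p])%N -> x = y.
Proof.
move=> p_pr; wlog le_yx : x y / (y <= x)%N.
  move=> H hx hy E; case: (leqP y x) => h; first exact: H.
  by apply/esym/H => //; apply: ltnW.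
move=> hx hy E.
have : (p %| (x - y) * (x + y))%N.
  have -> : ((x - y) * (x + y) = x * x - y * y)%N by nia.
  by rewrite -eqn_mod_dvd ?E // leq_mul.
rewrite Euclid_dvdM // => /orP [] /dvdn_leq; lia.
Qed.

(* Pigeonhole: the p + 1 residues x^2 and -1 - y^2 with 0 <= x, y <= p/2 cannot be distinct. *)
Lemma prime_sum2sq_add1 p : prime p -> odd p ->
  exists x y m : nat, [/\ (2 * x < p)%N, (2 * y < p)%N & (x * x + y * y + 1 = m * p)%N].
Proof.
move=> p_pr p_odd; have p_gt1 := prime_gt1 p_pr.
set h := p./2.
have p_eq : p = (2 * h).+1 by have := odd_double_half p; rewrite p_odd -/h; lia.
pose A := [seq ((x * x) %% p)%N | x <- iota 0 h.+1].
pose B := [seq (p.-1 - (y * y) %% p)%N | y <- iota 0 h.+1].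
have half z : z \in iota 0 h.+1 -> (2 * z < p)%N by rewrite mem_iota; lia.
have uA : uniq A.
  rewrite map_inj_in_uniq ?iota_uniq // => x y hx hy.
  exact: sqr_mod_inj (half x hx) (half y hy).
have uB : uniq B.
  rewrite map_inj_in_uniq ?iota_uniq // => x y hx hy E.
  apply: (sqr_mod_inj p_pr (half x hx) (half y hy)); move: E.
  have := ltn_pmod (x * x) (ltnW p_gt1); have := ltn_pmod (y * y) (ltnW p_gt1); lia.
have : has (mem B) A.
  apply/negPn/negP => AB_disj.
  have uAB : uniq (A ++ B) by rewrite cat_uniq uA uB has_sym AB_disj.
  have sub : {subset A ++ B <= iota 0 p}.
    move=> z; rewrite mem_cat mem_iota => /orP [] /mapP [x _ ->]; last lia.
    by rewrite ltn_pmod // ltnW.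
  have := uniq_leq_size uAB sub; rewrite size_cat !size_map !size_iota; lia.
case/hasP => z /mapP [x hx ->] /mapP [y hy E].
exists x, y, ((x * x) %/ p + (y * y) %/ p + 1)%N; split; [exact: half|exact: half|].
have := divn_eq (x * x) p; have := divn_eq (y * y) p.
have := ltn_pmod (y * y) (ltnW p_gt1); lia.
Qed.

Lemma prime_neq_proper_mul (p m : nat) (u : int) : prime p -> (1 < m < p)%N ->
  p%:Z <> m%:Z * u.
Proof.
move=> p_pr /andP [m_gt1 m_ltp] p_eq.
have : (m %| p)%N by rewrite -(@dvdzE m p); apply/dvdzP; exists u; rewrite mulrC.
by case/primeP: p_pr => _ /[apply] /orP []/eqP; lia.
Qed.

(* Euler's identity applied to (x1,..,x4) and (y1,..,y4) yields M^2 (r P) as a sum of four squares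
   all of whose terms are divisible by M^2. *)
Lemma sum4sq_reduce (M P x1 x2 x3 x4 t1 t2 t3 t4 y1 y2 y3 y4 : int) :
  M * P = x1 ^+ 2 + x2 ^+ 2 + x3 ^+ 2 + x4 ^+ 2 -> M != 0 ->
  x1 = M * t1 + y1 -> x2 = M * t2 + y2 -> x3 = M * t3 + y3 -> x4 = M * t4 + y4 ->
  exists2 r, y1 ^+ 2 + y2 ^+ 2 + y3 ^+ 2 + y4 ^+ 2 = M * r & sum4sq (r * P).
Proof.
move=> MP M0 x1E x2E x3E x4E.
have -> : y1 = x1 - M * t1 by rewrite x1E; ring.
have -> : y2 = x2 - M * t2 by rewrite x2E; ring.
have -> : y3 = x3 - M * t3 by rewrite x3E; ring.
have -> : y4 = x4 - M * t4 by rewrite x4E; ring.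
set S := x1 * t1 + x2 * t2 + x3 * t3 + x4 * t4.
set r := P - 2 * S + M * (t1 ^+ 2 + t2 ^+ 2 + t3 ^+ 2 + t4 ^+ 2).
have Mr : (x1 - M * t1) ^+ 2 + (x2 - M * t2) ^+ 2 + (x3 - M * t3) ^+ 2 + (x4 - M * t4) ^+ 2
          = M * r by rewrite /r mulrDr mulrBr MP /S; ring.
exists r => //.
exists (P - S), (- x1 * t2 + x2 * t1 - x3 * t4 + x4 * t3),
  (- x1 * t3 + x2 * t4 + x3 * t1 - x4 * t2), (- x1 * t4 - x2 * t3 + x3 * t2 + x4 * t1).
apply: (@mulfI _ (M * M)); first by rewrite mulf_neq0.
have MS : M * (P - S) = x1 * (x1 - M * t1) + x2 * (x2 - M * t2) + x3 * (x3 - M * t3)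
                        + x4 * (x4 - M * t4) by rewrite mulrBr MP /S; ring.
have -> : forall u2 u3 u4 : int, M * M * ((P - S) ^+ 2 + u2 ^+ 2 + u3 ^+ 2 + u4 ^+ 2)
    = (M * (P - S)) ^+ 2 + M * M * (u2 ^+ 2 + u3 ^+ 2 + u4 ^+ 2) by move=> *; ring.
have -> : M * M * (r * P) = (M * P) * (M * r) by ring.
by rewrite MS MP -Mr; ring.
Qed.

Lemma nearest_multiple (x M : int) : 0 < M ->
  exists t y : int, x = M * t + y /\ - M <= 2 * y < M.
Proof.
move=> M_gt0; exists ((2 * x + M) %/ (2 * M))%Z, (x - M * ((2 * x + M) %/ (2 * M))%Z).
split; first by ring.
have := divz_eq (2 * x + M) (2 * M).
have := @modz_ge0 (2 * x + M) (2 * M) ltac:(lia).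
have := @ltz_pmod (2 * x + M) (2 * M) ltac:(lia).
set q := (_ %/ _)%Z; set r := (_ %% _)%Z; nia.
Qed.

Lemma sqr_half_bound (y M : int) : - M <= 2 * y < M ->
  4 * y ^+ 2 <= M ^+ 2 /\ (4 * y ^+ 2 = M ^+ 2 -> 2 * y = - M).
Proof. move=> /andP [lo hi]; split; nia. Qed.

Lemma bounded_sum4_cases (M r Y1 Y2 Y3 Y4 : int) : 0 < M ->
  Y1 + Y2 + Y3 + Y4 = M * r -> 0 <= Y1 -> 0 <= Y2 -> 0 <= Y3 -> 0 <= Y4 ->
  4 * Y1 <= M ^+ 2 -> 4 * Y2 <= M ^+ 2 -> 4 * Y3 <= M ^+ 2 -> 4 * Y4 <= M ^+ 2 ->
  [\/ [/\ Y1 = 0, Y2 = 0, Y3 = 0 & Y4 = 0],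
      [/\ 4 * Y1 = M ^+ 2, 4 * Y2 = M ^+ 2, 4 * Y3 = M ^+ 2 & 4 * Y4 = M ^+ 2]
    | 0 < r < M].
Proof.
move=> M_gt0 Mr *.
have r_ge0 : 0 <= r by rewrite -(pmulr_rge0 _ M_gt0) -Mr; lia.
have r_leM : r <= M by rewrite -(ler_pM2l M_gt0) -expr2; lia.
have [r0|r_neq0] := eqVneq r 0; first by apply: Or31; rewrite r0 mulr0 in Mr; split; lia.
have [rM|r_neqM] := eqVneq r M.
  by apply: Or32; rewrite rM -expr2 in Mr; split; lia.
by apply: Or33; rewrite lt0r r_neq0 r_ge0 lt_neqAle r_neqM r_leM.
Qed.

Lemma sum4sq_descent (p m : nat) : prime p -> (1 < m < p)%N -> sum4sq (m%:Z * p%:Z) ->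
  exists2 r : nat, (0 < r < m)%N & sum4sq (r%:Z * p%:Z).
Proof.
move=> p_pr m_range [x1 [x2 [x3 [x4 mp]]]].
have M_gt0 : 0 < m%:Z by lia.
have [t1 [y1 [x1E /sqr_half_bound [q1 e1]]]] := nearest_multiple x1 M_gt0.
have [t2 [y2 [x2E /sqr_half_bound [q2 e2]]]] := nearest_multiple x2 M_gt0.
have [t3 [y3 [x3E /sqr_half_bound [q3 e3]]]] := nearest_multiple x3 M_gt0.
have [t4 [y4 [x4E /sqr_half_bound [q4 e4]]]] := nearest_multiple x4 M_gt0.
have [r Mr rP] := sum4sq_reduce mp (lt0r_neq0 M_gt0) x1E x2E x3E x4E.
have sq0 (y : int) : y ^+ 2 = 0 -> y = 0 by move/eqP; rewrite sqrf_eq0 => /eqP.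
have [Y0|YM|r_range] := bounded_sum4_cases M_gt0 Mr (sqr_ge0 y1) (sqr_ge0 y2) (sqr_ge0 y3)
  (sqr_ge0 y4) q1 q2 q3 q4.
- case: Y0 => /sq0 y1_0 /sq0 y2_0 /sq0 y3_0 /sq0 y4_0.
  case: (prime_neq_proper_mul (u := t1 ^+ 2 + t2 ^+ 2 + t3 ^+ 2 + t4 ^+ 2) p_pr m_range).
  apply: (mulfI (lt0r_neq0 M_gt0)).
  by rewrite mp x1E x2E x3E x4E y1_0 y2_0 y3_0 y4_0; ring.
- case: YM => /e1 y1E /e2 y2E /e3 y3E /e4 y4E.
  case: (prime_neq_proper_mul
    (u := t1 ^+ 2 + t2 ^+ 2 + t3 ^+ 2 + t4 ^+ 2 - (t1 + t2 + t3 + t4) + 1) p_pr m_range).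
  apply: (@mulfI _ (4 * m%:Z)); first by rewrite mulf_neq0 // lt0r_neq0.
  have -> : 4 * m%:Z * p%:Z = (2 * x1) ^+ 2 + (2 * x2) ^+ 2 + (2 * x3) ^+ 2 + (2 * x4) ^+ 2.
    by rewrite -mulrA mp; ring.
  have dbl (x t y : int) : x = m%:Z * t + y -> 2 * y = - m%:Z -> 2 * x = m%:Z * (2 * t - 1).
    by move=> -> ey; rewrite mulrDr ey; ring.
  rewrite (dbl _ _ _ x1E y1E) (dbl _ _ _ x2E y2E) (dbl _ _ _ x3E y3E) (dbl _ _ _ x4E y4E).
  ring.
case/andP: r_range => r_gt0 r_ltm; exists `|r|%N; last by rewrite gez0_abs // ltW.
by apply/andP; split; clear -r_gt0 r_ltm; lia.
Qed.

Lemma sum4sq_prime p : prime p -> sum4sq p%:Z.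
Proof.
move=> p_pr; case: (even_prime p_pr) => [->|p_odd]; first by exists 1, 1, 0, 0.
have [x [y [m [x_lt y_lt mp]]]] := prime_sum2sq_add1 p_pr p_odd.
have p_gt1 := prime_gt1 p_pr.
have m_gt0 : (0 < m)%N by case: m mp => //; rewrite mul0n addn1.
have m_ltp : (m < p)%N by nia.
have : sum4sq (m%:Z * p%:Z).
  by exists x%:Z, y%:Z, 1, 0; rewrite -PoszM -mp !PoszD !PoszM; ring.
elim/ltn_ind: m m_gt0 m_ltp {mp} => m IH m_gt0 m_ltp mp_sum.
case: (ltnP 1 m) => [m_gt1|m_le1]; last first.
  have m1 : m = 1%N by lia.
  by rewrite m1 -PoszM mul1n in mp_sum.
have m_range : (1 < m < p)%N by rewrite m_gt1.
have [r /andP [r_gt0 r_ltm] rp_sum] := sum4sq_descent p_pr m_range mp_sum.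
exact: IH r_ltm r_gt0 (ltn_trans r_ltm m_ltp) rp_sum.
Qed.

Theorem lagrange_four_squares (n : nat) : sum4sq n%:Z.
Proof.
elim/ltn_ind: n => n IH.
case: (ltnP 1 n) => n_gt1; last first.
  by case: n n_gt1 {IH} => [|[|]] // _; [exists 0, 0, 0, 0 | exists 1, 0, 0, 0].
have [q q_pr q_dvd] := pdivP n_gt1.
have n_eq : n = (q * (n %/ q))%N by rewrite mulnC divnK.
have lt_n : (n %/ q < n)%N by rewrite ltn_Pdiv ?prime_gt1 //; lia.
by rewrite n_eq PoszM; apply: sum4sqM; [exact: sum4sq_prime | exact: IH].
Qed.

(** * Matrix identities *)

Section AnticommutingMatrices.
Variables (R : comPzRingType) (n : nat).
Implicit Types (A B C : 'M[R]_n).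

Definition anticomm_mx A B := A *m B = - (B *m A).

Lemma mulmx_sqrD_anticomm A B : anticomm_mx A B -> (A + B) *m (A + B) = A *m A + B *m B.
Proof. by move=> AB; rewrite mulmxDl !mulmxDr AB -addrA addKr. Qed.

Lemma anticomm_mxDl A B C : anticomm_mx A C -> anticomm_mx B C -> anticomm_mx (A + B) C.
Proof. by rewrite /anticomm_mx mulmxDl mulmxDr opprD => -> ->. Qed.

Lemma anticomm_mxZ (a b : R) A B : anticomm_mx A B -> anticomm_mx (a *: A) (b *: B).
Proof.
rewrite /anticomm_mx -!scalemxAl -!scalemxAr => ->.
by rewrite !scalerN !scalerA mulrC.
Qed.

Lemma scalemx_sqr (a : R) A : (a *: A) *m (a *: A) = (a ^+ 2) *: (A *m A).
Proof. by rewrite -scalemxAl -scalemxAr scalerA expr2. Qed.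

Lemma quaternion_sqr A B (a b c : R) :
  A *m A = -1%:M -> B *m B = -1%:M -> anticomm_mx A B ->
  let Q := a *: A + b *: B + c *: (A *m B) in
  Q *m Q = - (a ^+ 2 + b ^+ 2 + c ^+ 2)%:M.
Proof.
move=> AA BB AB /=.
have BA : B *m A = - (A *m B) by rewrite AB opprK.
have AAB : A *m (A *m B) = - B by rewrite mulmxA AA mulNmx mul1mx.
have BAB : B *m (A *m B) = A by rewrite mulmxA BA mulNmx -mulmxA BB mulmxN mulmx1 opprK.
have AC : anticomm_mx A (A *m B) by rewrite /anticomm_mx AAB -mulmxA BA mulmxN AAB opprK.
have BC : anticomm_mx B (A *m B) by rewrite /anticomm_mx BAB -mulmxA BB mulmxN mulmx1 opprK.
have CC : (A *m B) *m (A *m B) = -1%:M by rewrite -mulmxA BAB AA.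
rewrite mulmx_sqrD_anticomm; last by apply: anticomm_mxDl; apply: anticomm_mxZ.
rewrite mulmx_sqrD_anticomm; last exact: anticomm_mxZ.
by rewrite !scalemx_sqr AA BB CC !scalerN !scalemx1 -!opprD -!raddfD.
Qed.
End AnticommutingMatrices.

Section ScalarPlusMatrix.
Variables (R : comPzRingType) (n : nat).
Implicit Types (A B K : 'M[R]_n).

Lemma mulmx_scalar_addsub (x : R) K : (x%:M + K) *m (x%:M - K) = (x ^+ 2)%:M - K *m K.
Proof.
rewrite mulmxDl !mulmxDr !mulmxN [K *m _]scalar_mxC -scalar_mxM -expr2.
by rewrite addrA subrK.
Qed.

Lemma mulmx_scalar_subadd (x : R) K : (x%:M - K) *m (x%:M + K) = (x ^+ 2)%:M - K *m K.
Proof. by have := mulmx_scalar_addsub x (- K); rewrite opprK mulmxN mulNmx opprK. Qed.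

Lemma tr_scalar_add_skew (x : R) K : K^T = - K -> (x%:M + K)^T = x%:M - K.
Proof. by move=> sK; rewrite linearD /= tr_scalar_mx sK. Qed.

Lemma mulmx_tr_block_skew A B (s : R) :
  comm_mx A B -> A^T *m A = A *m A^T -> B^T *m B = B *m B^T ->
  A *m A^T + B *m B^T = s%:M ->
  let M := block_mx A B (- B^T) A^T in M *m M^T = s%:M.
Proof.
move=> AB nA nB sAB /=.
rewrite tr_block_mx !trmxK linearN /= trmxK mulmx_block (scalar_mx_block n n).
rewrite mulmxN !mulNmx mulmxN opprK nA nB -!trmx_mul AB !addNr.
by rewrite [B *m _ + _]addrC sAB.
Qed.
End ScalarPlusMatrix.

Lemma comm_mxZ (R : comPzRingType) n (a : R) (A B : 'M[R]_n) :
  comm_mx A B -> comm_mx A (a *: B).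
Proof. by move=> AB; rewrite /comm_mx -scalemxAr -scalemxAl AB. Qed.

(** * Frames of Construction A lattices *)

Lemma mod3M m n p (X : 'M[int]_(m, n)) (Y : 'M[int]_(n, p)) :
  mod3 (X *m Y) = mod3 X *m mod3 Y.
Proof. exact: map_mxM. Qed.

Lemma intr3_Z3 : ((3 : int)%:~R : 'Z_3) = 0.
Proof. exact: val_inj. Qed.

Lemma mod3_add3Z m n (X Y : 'M[int]_(m, n)) : mod3 (X + 3 *: Y) = mod3 X.
Proof. by apply/matrixP => i j; rewrite !mxE intrD intrM intr3_Z3 mul0r addr0. Qed.

Lemma C3_block_rows n (W A B C D : 'M[int]_n) :
  mod3 B = mod3 A *m mod3 W -> mod3 D = mod3 C *m mod3 W ->
  forall i, C3 W (row i (mod3 (block_mx A B C D))).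
Proof.
move=> hB hD i.
have -> : mod3 (block_mx A B C D) = col_mx (mod3 A) (mod3 C) *m row_mx 1%:M (mod3 W).
  by rewrite mul_col_mx !mul_mx_row !mulmx1 -hB -hD -block_mxEv /mod3 map_block_mx.
by exists (row i (col_mx (mod3 A) (mod3 C))); rewrite row_mul.
Qed.

Lemma rho_mod3 N (v : 'rV[int]_N) : rho (mod3 v) + 3 *: map_mx (fun x => (x %/ 3)%Z) v = v.
Proof.
apply/rowP => j; rewrite !mxE; set x := v 0 j.
have r_ge0 : (0 <= (x %% 3)%Z) := @modz_ge0 x 3 isT.
have r_lt3 : ((x %% 3)%Z < 3) := @ltz_pmod x 3 isT.
have [r def_r] : exists r : nat, (x %% 3)%Z = r by exists `|(x %% 3)%Z|%N; rewrite gez0_abs.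
have x3 : (x%:~R : 'Z_3) = r%:R.
  by rewrite {1}(divz_eq x 3) def_r intrD intrM intr3_Z3 mulr0 add0r.
rewrite x3; have -> : val (r%:R : 'Z_3) = (r %% 3)%N := @val_Zp_nat 3 isT r.
rewrite modn_small; last by rewrite def_r in r_lt3; lia.
by rewrite -def_r {3}(divz_eq x 3); ring.
Qed.

Lemma has_frame_of_gram (R : realType) N (C : 'rV['Z_3]_N -> Prop) (M : 'M[int]_N)
    (k : nat) :
  M *m M^T = (3 * k%:Z)%:M -> (forall i, C (row i (mod3 M))) ->
  @has_frame R N (@constructionA3 R N C) k%:R.
Proof.
move=> gram inC; set s : R := Num.sqrt 3.
exists (fun i => s^-1 *: map_mx intr (row i M)); split.
  move=> i; exists (row i (mod3 M)), (map_mx (fun x => (x %/ 3)%Z) (row i M)).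
  by split => //; rewrite -map_row rho_mod3.
move=> i j; rewrite /dotv !mxE.
have G : \sum_l (M i l)%:~R * (M j l)%:~R = (3 * k%:Z *+ (i == j))%:~R :> R.
  have := congr1 (fun A : 'M[int]_N => (A i j)%:~R : R) gram; rewrite !mxE rmorph_sum => <-.
  by apply: eq_bigr => l _; rewrite mxE rmorphM.
rewrite (eq_bigr (fun l => s^-1 * s^-1 * ((M i l)%:~R * (M j l)%:~R))); last first.
  by move=> l _; rewrite !mxE; ring.
rewrite -mulr_sumr G.
case: ifP => _ /=; last by rewrite mulr0n mulr0z mulr0.
have s2 : s * s = 3 by rewrite -expr2 sqr_sqrtr.
have s0 : s != 0.
  by apply/eqP => s_0; move: s2; rewrite s_0 mulr0 => /eqP; rewrite eq_sym pnatr_eq0.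
rewrite mulr1n intrM (_ : (3 : int)%:~R = s * s) // (_ : (k%:Z)%:~R = k%:R) //.
by field.
Qed.

Section WeighingFrame.
Variables (n : nat) (w : int) (W I J : 'M[int]_n).
Hypotheses (W_skew : W^T = - W) (W_weight : W *m W^T = w%:M).
Hypotheses (I_skew : I^T = - I) (J_skew : J^T = - J).
Hypotheses (I_sqr : I *m I = - 1%:M) (J_sqr : J *m J = - 1%:M) (IJ : anticomm_mx I J).
Hypotheses (IW : comm_mx I W) (JW : comm_mx J W).

Definition quat_mx (b c d : int) : 'M[int]_n := b *: I + c *: J + d *: (I *m J).

Lemma tr_quat_mx b c d : (quat_mx b c d)^T = - quat_mx b c d.
Proof.
have JI : J *m I = - (I *m J) by rewrite IJ opprK.
rewrite /quat_mx !linearD !linearZ /= trmx_mul I_skew J_skew mulNmx mulmxN opprK JI.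
by rewrite ?scalerN ?opprD.
Qed.

Lemma quat_mx_comm b c d : comm_mx W (quat_mx b c d).
Proof.
apply: comm_mxD; [apply: comm_mxD|]; apply: comm_mxZ; [| |apply: comm_mxM];
  exact: comm_mx_sym.
Qed.

Definition frame_mx (a c d1 d2 d3 d4 : int) : 'M[int]_(n + n) :=
  let A := (a + 3 * c)%:M + 3 *: quat_mx d2 d3 d4 in
  let B := (3 * d1)%:M + a *: W in
  block_mx A B (- B^T) A^T.

Lemma frame_mx_gram a c d1 d2 d3 d4 :
  frame_mx a c d1 d2 d3 d4 *m (frame_mx a c d1 d2 d3 d4)^T =
  ((a + 3 * c) ^+ 2 + a ^+ 2 * w + 9 * (d1 ^+ 2 + d2 ^+ 2 + d3 ^+ 2 + d4 ^+ 2))%:M.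
Proof.
set Q := quat_mx d2 d3 d4.
have QQ : Q *m Q = - (d2 ^+ 2 + d3 ^+ 2 + d4 ^+ 2)%:M by exact: quaternion_sqr.
have WW : W *m W = - w%:M by rewrite -W_weight W_skew mulmxN opprK.
have skew3Q : (3 *: Q)^T = - (3 *: Q) by rewrite linearZ /= tr_quat_mx scalerN.
have skewaW : (a *: W)^T = - (a *: W) by rewrite linearZ /= W_skew scalerN.
apply: mulmx_tr_block_skew.
- apply: comm_mxD; first exact: comm_mx_scalar.
  apply: comm_mx_sym; apply: comm_mxD; first exact: comm_mx_scalar.
  apply: comm_mxZ; apply: comm_mx_sym; apply: comm_mxZ; apply: comm_mx_sym.
  exact: quat_mx_comm.
- by rewrite tr_scalar_add_skew // mulmx_scalar_addsub mulmx_scalar_subadd.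
- by rewrite tr_scalar_add_skew // mulmx_scalar_addsub mulmx_scalar_subadd.
rewrite !tr_scalar_add_skew // !mulmx_scalar_addsub !scalemx_sqr QQ WW.
rewrite !scalerN !scale_scalar_mx -!raddfN -!raddfB -raddfD; congr (_%:M); ring.
Qed.

Lemma frame_mx_C3 a c d1 d2 d3 d4 i : (3 %| w + 1)%Z ->
  C3 W (row i (mod3 (frame_mx a c d1 d2 d3 d4))).
Proof.
move=> /dvdzP [t w1]; rewrite /frame_mx.
have := tr_quat_mx d2 d3 d4; move: (quat_mx d2 d3 d4) => Q Q_skew.
have WW : W *m W = - w%:M by rewrite -W_weight W_skew mulmxN opprK.
have skew3Q : (3 *: Q)^T = - (3 *: Q) by rewrite linearZ /= Q_skew scalerN.
have skewaW : (a *: W)^T = - (a *: W) by rewrite linearZ /= W_skew scalerN.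
apply: C3_block_rows; rewrite ?tr_scalar_add_skew //.
- have -> : (3 * d1)%:M + a *: W = a%:M *m W + 3 *: d1%:M.
    by rewrite addrC mul_scalar_mx (scale_scalar_mx _ 3 d1).
  have -> : (a + 3 * c)%:M + 3 *: Q = a%:M + 3 *: (c%:M + Q).
    by rewrite scalerDr (scale_scalar_mx _ 3 c) addrA -raddfD.
  by rewrite !mod3_add3Z mod3M.
have -> : (a + 3 * c)%:M - 3 *: Q = a%:M + 3 *: (c%:M - Q).
  by rewrite scalerBr (scale_scalar_mx _ 3 c) addrA -raddfD.
have -> : - ((3 * d1)%:M - a *: W) = a%:M *m W + 3 *: (- d1%:M).
  by rewrite opprB mul_scalar_mx scalerN (scale_scalar_mx _ 3 d1) addrC.
rewrite !mod3_add3Z -mod3M -mulmxA WW mulmxN mul_scalar_mx (scale_scalar_mx _ a).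
have wE : w = t * 3 - 1 by rewrite -w1 addrK.
have -> : - (a * w)%:M = a%:M + 3 *: (- (a * t))%:M :> 'M[int]_n.
  apply/matrixP => k l; rewrite !mxE wE.
  by case: (_ == _); rewrite /= ?mulr1n ?mulr0n; ring.
by rewrite mod3_add3Z.
Qed.
End WeighingFrame.

(** * The weighing matrix W_{32,23} *)

(* Explicit matrices are rewritten as [nat_mx] of entry functions on nat, on which identities
   reduce to a boolean check that [vm_compute] evaluates: entries of [\matrix_] do not reduce,
   [matrix_key] being opaque. *)
Definition nat_mx n (f : nat -> nat -> int) : 'M[int]_n := \matrix_(i, j) f i j.

Definition nat_mx_eqb n (f g : nat -> nat -> int) : bool :=
  all (fun i => all (fun j => f i j == g i j) (iota 0 n)) (iota 0 n).

Definition mul_natf n (f g : nat -> nat -> int) (i j : nat) : int :=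
  foldr (fun k s => f i k * g k j + s) 0 (iota 0 n).

Definition block_natf n (f g h l : nat -> nat -> int) (i j : nat) : int :=
  if (i < n)%N then (if (j < n)%N then f i j else g i (j - n)%N)
  else (if (j < n)%N then h (i - n)%N j else l (i - n)%N (j - n)%N).

Definition negacircf n (r : seq int) (i j : nat) : int :=
  if (i <= j)%N then nth 0 r (j - i) else - nth 0 r (n + j - i).

Lemma nat_mxP n f g : nat_mx_eqb n f g -> nat_mx n f = nat_mx n g.
Proof.
move=> /allP fg; apply/matrixP => i j; rewrite !mxE; apply/eqP.
have iI : (i : nat) \in iota 0 n by rewrite mem_iota leq0n add0n ltn_ord.
have jI : (j : nat) \in iota 0 n by rewrite mem_iota leq0n add0n ltn_ord.
exact: (allP (fg i iI) j jI).
Qed.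

Lemma mul_nat_mx n f g : nat_mx n f *m nat_mx n g = nat_mx n (mul_natf n f g).
Proof.
apply/matrixP => i j; rewrite !mxE /mul_natf.
under eq_bigr do rewrite !mxE.
rewrite -(big_mkord xpredT (fun k => f i k * g k j)) /index_iota subn0.
by elim: (iota 0 n) => [|k s IH]; rewrite ?big_nil ?big_cons ?IH.
Qed.

Lemma tr_nat_mx n f : (nat_mx n f)^T = nat_mx n (fun i j => f j i).
Proof. by apply/matrixP => i j; rewrite !mxE. Qed.

Lemma opp_nat_mx n f : - nat_mx n f = nat_mx n (fun i j => - f i j).
Proof. by apply/matrixP => i j; rewrite !mxE. Qed.

Lemma scalar_nat_mx n a : a%:M = nat_mx n (fun i j => a *+ (i == j)).
Proof. by apply/matrixP => i j; rewrite !mxE. Qed.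

Lemma zero_nat_mx n : 0 = nat_mx n (fun _ _ => 0).
Proof. by apply/matrixP => i j; rewrite !mxE. Qed.

Ltac nat_mx_compute := apply: nat_mxP; vm_cast_no_check (erefl true).

Lemma negacirc_nat_mx n r : negacirc n r = nat_mx n (negacircf n r).
Proof. by []. Qed.

Lemma block_nat_mx n f g h l :
  block_mx (nat_mx n f) (nat_mx n g) (nat_mx n h) (nat_mx n l)
  = nat_mx (n + n) (block_natf n f g h l).
Proof.
have hi_ge (k : 'I_n) : (n + k < n)%N = false by rewrite ltnNge leq_addr.
apply/matrixP => i j.
by case: (split_ordP i) => i' ->; case: (split_ordP j) => j' ->;
  rewrite ?block_mxEul ?block_mxEur ?block_mxEdl ?block_mxEdr !mxE /block_natf /=
          ?ltn_ord ?hi_ge ?addKn.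
Qed.

Lemma W32_23_nat_mx :
  W32_23 = nat_mx 32 (block_natf 16 (negacircf 16 rA) (negacircf 16 rB)
                        (fun i j => - negacircf 16 rB j i) (fun i j => negacircf 16 rA j i)).
Proof. by rewrite /W32_23 /matA /matB !negacirc_nat_mx !tr_nat_mx opp_nat_mx block_nat_mx. Qed.

Lemma tr_W32_23 : W32_23^T = - W32_23.
Proof. rewrite W32_23_nat_mx tr_nat_mx opp_nat_mx; nat_mx_compute. Qed.

Lemma W32_23_weight : W32_23 *m W32_23^T = 23%:M.
Proof. rewrite W32_23_nat_mx tr_nat_mx mul_nat_mx scalar_nat_mx; nat_mx_compute. Qed.

(* Acting on coefficient rows of Z[x]/(x^16 + 1), S16 is multiplication by x^8, a square root
   of -1, and D16 is the involution p(x) |-> p(1/x), which maps x^i to -x^(16-i) for 0 < i. *)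
Definition x8 : seq int := [:: 0; 0; 0; 0; 0; 0; 0; 0; 1; 0; 0; 0; 0; 0; 0; 0].
Definition inversef (i j : nat) : int :=
  if (j == (16 - i) %% 16)%N then (if i == 0%N then 1 else -1) else 0.
Definition S16 : 'M[int]_16 := negacirc 16 x8.
Definition D16 : 'M[int]_16 := nat_mx 16 inversef.
Definition T1 : 'M[int]_32 := block_mx S16 0 0 S16.
Definition T2 : 'M[int]_32 := block_mx 0 (- D16) D16 0.

Lemma T1_nat_mx :
  T1 = nat_mx 32 (block_natf 16 (negacircf 16 x8) (fun _ _ => 0) (fun _ _ => 0) (negacircf 16 x8)).
Proof. by rewrite /T1 /S16 negacirc_nat_mx (zero_nat_mx 16) block_nat_mx. Qed.

Lemma tr_T1 : T1^T = - T1.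
Proof. rewrite T1_nat_mx tr_nat_mx opp_nat_mx; nat_mx_compute. Qed.
Lemma T1_sqr : T1 *m T1 = - 1%:M.
Proof. rewrite T1_nat_mx mul_nat_mx scalar_nat_mx opp_nat_mx; nat_mx_compute. Qed.
Lemma T1_W32_23 : comm_mx T1 W32_23.
Proof. rewrite /comm_mx T1_nat_mx W32_23_nat_mx !mul_nat_mx; nat_mx_compute. Qed.

Lemma T2_nat_mx :
  T2 = nat_mx 32 (block_natf 16 (fun _ _ => 0) (fun i j => - inversef i j) inversef (fun _ _ => 0)).
Proof. by rewrite /T2 /D16 opp_nat_mx (zero_nat_mx 16) block_nat_mx. Qed.

Lemma tr_T2 : T2^T = - T2.
Proof. rewrite T2_nat_mx tr_nat_mx opp_nat_mx; nat_mx_compute. Qed.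
Lemma T2_sqr : T2 *m T2 = - 1%:M.
Proof. rewrite T2_nat_mx mul_nat_mx scalar_nat_mx opp_nat_mx; nat_mx_compute. Qed.
Lemma T2_W32_23 : comm_mx T2 W32_23.
Proof. rewrite /comm_mx T2_nat_mx W32_23_nat_mx !mul_nat_mx; nat_mx_compute. Qed.
Lemma T1_T2_anticomm : anticomm_mx T1 T2.
Proof. rewrite /anticomm_mx T1_nat_mx T2_nat_mx !mul_nat_mx opp_nat_mx; nat_mx_compute. Qed.

Lemma W32_23_has_frame (R : realType) (k : nat) (a c d1 d2 d3 d4 : int) :
  k%:Z = 8 * a ^+ 2 + 2 * a * c + 3 * c ^+ 2 + 3 * (d1 ^+ 2 + d2 ^+ 2 + d3 ^+ 2 + d4 ^+ 2) ->
  @has_frame R 64 (@constructionA3 R 64 (C3 W32_23)) k%:R.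
Proof.
move=> k_eq.
have rows i := frame_mx_C3 tr_W32_23 W32_23_weight tr_T1 tr_T2 T1_T2_anticomm
  a c d1 d2 d3 d4 i isT.
apply: has_frame_of_gram rows.
have := frame_mx_gram tr_W32_23 W32_23_weight tr_T1 tr_T2 T1_sqr T2_sqr T1_T2_anticomm
  T1_W32_23 T2_W32_23 a c d1 d2 d3 d4.
by move=> ->; rewrite k_eq; congr (_%:M); ring.
Qed.

Lemma frame_norm_repr (k : nat) : (3 <= k)%N -> k \notin [:: 4; 5; 7; 10]%N ->
  exists a c d1 d2 d3 d4 : int,
    k%:Z = 8 * a ^+ 2 + 2 * a * c + 3 * c ^+ 2 + 3 * (d1 ^+ 2 + d2 ^+ 2 + d3 ^+ 2 + d4 ^+ 2).
Proof.
move=> k_ge3; rewrite !inE !negb_or => /and4P [k4 k5 k7 k10].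
have [a [c [q k_eq]]] : exists (a c : int) (q : nat),
    k%:Z = 8 * a ^+ 2 + 2 * a * c + 3 * c ^+ 2 + 3 * q%:Z.
  have := divn_eq k 3; have := ltn_pmod k (isT : (0 < 3)%N).
  case: (k %% 3)%N => [|[|[|//]]] _ k_eq.
  - by exists 0, 0, (k %/ 3)%N; lia.
  - by exists 1, 1, (k %/ 3 - 4)%N; lia.
  - by exists 1, 0, (k %/ 3 - 2)%N; lia.
have [d1 [d2 [d3 [d4 q_eq]]]] := lagrange_four_squares q.
by exists a, c, d1, d2, d3, d4; rewrite k_eq q_eq.
Qed.

Theorem lemma7p1 (R : realType) (k : nat) :
  (3 <= k)%N ->
  ~ (exists m1 m2 m3 m4 : nat, k = (2 ^ m1 * 5 ^ m2 * 7 ^ m3 * 23 ^ m4)%N) ->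
  @has_frame R 64 (@constructionA3 R 64 (C3 W32_23)) (k%:R).
Proof.
move=> k_ge3 k_not_smooth.
have k_not_small : k \notin [:: 4; 5; 7; 10]%N.
  apply/negP; rewrite !inE => /or4P [] /eqP k_eq; apply: k_not_smooth; rewrite k_eq.
  - by exists 2%N, 0%N, 0%N, 0%N.
  - by exists 0%N, 1%N, 0%N, 0%N.
  - by exists 0%N, 0%N, 1%N, 0%N.
  - by exists 1%N, 1%N, 0%N, 0%N.
have [a [c [d1 [d2 [d3 [d4 k_eq]]]]]] := frame_norm_repr k_ge3 k_not_small.
exact: W32_23_has_frame k_eq.
Qed.
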